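(* Let $G$ be a connected cubic graph of order $n\geq 6$ with $\alpha(G)=\frac{3}{5}\,\mathrm{diss}(G)$. Then $n$ is divisible by $18$, $\alpha(G)=\frac{n}{3}$, $\mathrm{diss}(G)=\frac{5n}{9}$, and for every maximum dissociation set $D$ of $G$, every component of $G[D]$ has exactly two vertices (i.e. $G[D]$ has no isolated vertices).
   Context: All graphs are finite, simple and undirected. $\alpha(G)$ denotes the independence number of $G$. A set $D$ of vertices of $G$ is a dissociation set if the subgraph $G[D]$ induced by $D$ has maximum degree at most $1$; the dissociation number $\mathrm{diss}(G)$ is the maximum order of a dissociation set in $G$; a maximum dissociation set is a dissociation set of order $\mathrm{diss}(G)$. *)

From mathcomp Require Import all_boot.
Set Implicit Arguments. Unset Strict Implicit. Unset Printing Implicit Defensive.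

Definition simple_graph (V : finType) (e : rel V) : Prop :=
  symmetric e /\ irreflexive e.

Definition nbhd (V : finType) (e : rel V) (v : V) : {set V} := [set u | e v u].

Definition cubic (V : finType) (e : rel V) : Prop :=
  forall v : V, #|nbhd e v| = 3.

Definition connected_graph (V : finType) (e : rel V) : Prop :=
  forall x y : V, connect e x y.

Definition independent (V : finType) (e : rel V) (S : {set V}) : bool :=
  [forall x in S, forall y in S, ~~ e x y].

Definition alpha (V : finType) (e : rel V) : nat :=
  \max_(S : {set V} | independent e S) #|S|.

Definition dissociation (V : finType) (e : rel V) (D : {set V}) : bool :=
  [forall v in D, #|nbhd e v :&: D| <= 1].

Definition diss (V : finType) (e : rel V) : nat :=
  \max_(D : {set V} | dissociation e D) #|D|.

Definition max_dissociation (V : finType) (e : rel V) (D : {set V}) : Prop :=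
  dissociation e D /\ #|D| = diss e.

From mathcomp Require Import all_boot zify fingroup perm.
Set Implicit Arguments. Unset Strict Implicit. Unset Printing Implicit Defensive.

(* Brooks' theorem for cubic graphs: a connected cubic graph other than K4 is
   3-colourable, so n <= 3 alpha.  Conversely, double counting the edges that
   leave a dissociation set D gives 3 |D| + i(D) <= n + 2 alpha, where i(D) is
   the number of isolated vertices of G[D]: the outside vertices with three
   neighbours in D, together with half of those with two, are independent.
   If 5 alpha = 3 diss, both bounds are tight for every maximum dissociation
   set D, hence n = 3 alpha, 9 diss = 5 n and i(D) = 0; finally 3 n is even
   (handshake lemma), so 18 divides n. *)

Lemma exists_notin (T : finType) (C : {set T}) : #|C| < #|T| -> exists c, c \notin C.
Proof.
move=> ltCT; have /subsetPn [c _ cNC] : ~~ ([set: T] \subset C).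
  by apply: contraTN ltCT => /subset_leq_card; rewrite cardsT leqNgt.
by exists c.
Qed.

Lemma notin_card_lt (T : finType) (A : {set T}) x : x \notin A -> #|A| < #|T|.
Proof.
by move=> xNA; rewrite -cardsT proper_card // properT; apply: contraNneq xNA => ->.
Qed.

Lemma perm_map2 (T : finType) (x1 x2 y1 y2 : T) :
  x1 != x2 -> y1 != y2 -> exists p : {perm T}, p x1 = y1 /\ p x2 = y2.
Proof.
move=> x12 y12; set z := tperm x1 y1 x2.
have zy1 : z != y1 by rewrite -[y1](tpermL x1) (inj_eq perm_inj) eq_sym.
exists (tperm x1 y1 * tperm z y2)%g; rewrite !permM tpermL -/z tpermL.
by rewrite tpermD // eq_sym.
Qed.

Lemma perm_avoid2 (x1 x2 y1 y2 : 'I_3) : exists p : {perm 'I_3}, p x1 != y1 /\ p x2 != y2.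
Proof.
have [<-|x12] := eqVneq x1 x2.
  have [|c] := @exists_notin _ [set y1; y2]; first by rewrite cards2 card_ord; case: (_ != _).
  by rewrite !inE negb_or => /andP [cy1 cy2]; exists (tperm x1 c); rewrite tpermL.
have [|c1 c1y1] := @exists_notin _ [set y1]; first by rewrite cards1 card_ord.
have [|c2] := @exists_notin _ [set y2; c1]; first by rewrite cards2 card_ord; case: (_ != _).
rewrite !inE in c1y1 * => /norP [c2y2 c2c1].
have [p [px1 px2]] : exists p : {perm 'I_3}, p x1 = c1 /\ p x2 = c2.
  by apply: perm_map2; rewrite // eq_sym.
by exists p; rewrite px1 px2.
Qed.

Section Graph.

Variables (V : finType) (e : rel V).

Definition proper_colouring (S : {set V}) (f : V -> 'I_3) :=
  forall x y, x \in S -> y \in S -> e x y -> f x != f y.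

Definition separates (B W : {set V}) :=
  forall w y, w \in W -> y \notin W -> e w y -> y \in B.

Definition isolated (D : {set V}) := [set x in D | #|nbhd e x :&: D| == 0].

Lemma card_nbhdI x (B : {set V}) : #|nbhd e x :&: B| = \sum_(y in B) e x y.
Proof.
rewrite -sum1_card big_mkcond [RHS]big_mkcond; apply: eq_bigr => y _.
by rewrite !inE; case: (y \in B); case: (e x y).
Qed.

Lemma sum_mem_card (A B : {set V}) : \sum_(x in A) (x \in B) = #|A :&: B|.
Proof.
rewrite -sum1_card big_mkcond [RHS]big_mkcond; apply: eq_bigr => x _.
by rewrite inE; case: (x \in A).
Qed.

Lemma leq_card_alpha (S : {set V}) : independent e S -> #|S| <= alpha e.
Proof. exact: leq_bigmax_cond. Qed.

Lemma exists_max_dissociation : exists D, max_dissociation e D.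
Proof.
have some_diss : 0 < #|[pred D : {set V} | dissociation e D]|.
  by apply/card_gt0P; exists set0; rewrite inE; apply/forallP => x; rewrite inE.
have [D DD diss_D] := eq_bigmax_cond (fun D : {set V} => #|D|) some_diss.
by exists D; split; [rewrite inE in DD | rewrite /diss -diss_D].
Qed.

Lemma connected_closed_setT (S : {set V}) x :
  connected_graph e -> x \in S -> (forall s y, s \in S -> e s y -> y \in S) -> S = setT.
Proof.
move=> conn xS closedS; apply/setP => y; rewrite inE.
have /connectP [p pP ->] := conn x y.
by elim: p x xS pP => [|z p IH] x xS //= /andP [/(closedS _ _ xS) zS /(IH z zS)].
Qed.

End Graph.

Section Colouring.

Variables (V : finType) (e : rel V).
Hypotheses (e_sym : symmetric e) (e_irr : irreflexive e) (e_cubic : cubic e).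

Lemma colour_extend1 (S : {set V}) f s :
  proper_colouring e S f -> s \notin S -> #|f @: (nbhd e s :&: S)| < 3 ->
  exists2 f', proper_colouring e (s |: S) f' & {in S, f' =1 f}.
Proof.
move=> fS sNS lt3; have [c cN] : exists c, c \notin f @: (nbhd e s :&: S).
  by apply: exists_notin; rewrite card_ord.
have nbr_colour z : z \in S -> e s z -> f z != c.
  by move=> zS sz; apply: contraNneq cN => <-; apply: imset_f; rewrite !inE sz.
exists (fun x => if x == s then c else f x); last first.
  by move=> x xS /=; case: eqP => // xs; rewrite -xs xS in sNS.
move=> x y; rewrite !inE.
case: (x =P s) => [-> _|_ /= xS]; case: (y =P s) => [-> _|_ /= yS] xy.
- by rewrite e_irr in xy.
- by rewrite eq_sym nbr_colour.
- by rewrite nbr_colour // e_sym.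
- exact: fS.
Qed.

Lemma colour_greedy (P U : {set V}) f :
  proper_colouring e P f -> [disjoint P & U] ->
  (forall W : {set V}, W \subset U -> W != set0 ->
     exists2 w, w \in W & #|nbhd e w :&: W| + #|f @: (nbhd e w :&: P)| <= 2) ->
  exists2 f', proper_colouring e (P :|: U) f' & {in P, f' =1 f}.
Proof.
move=> fP; have [n] := ubnP #|U|; elim: n U => // n IH U /ltnSE leUn PU degenerate.
have [->|U0] := eqVneq U set0; first by exists f; rewrite ?setU0.
have [w wU w_small] := degenerate U (subxx U) U0.
have [f1 f1P f1f] : exists2 f1, proper_colouring e (P :|: U :\ w) f1 & {in P, f1 =1 f}.
  apply: IH; first by move: leUn; rewrite (cardsD1 w U) wU.
    exact: disjointWr (subsetDl U _) PU.
  by move=> W /subset_trans /(_ (subsetDl U _)); apply: degenerate.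
have wN : w \notin P :|: U :\ w by rewrite !inE eqxx (disjointFl PU wU).
have [|f2 f2P f2f1] := colour_extend1 f1P wN.
  have f1_P : f1 @: (nbhd e w :&: P) = f @: (nbhd e w :&: P).
    by apply: eq_in_imset => x /setIP [_ /f1f].
  have le_U : #|f1 @: (nbhd e w :&: (U :\ w))| <= #|nbhd e w :&: U|.
    exact: leq_trans (leq_imset_card _ _) (subset_leq_card (setIS _ (subsetDl _ _))).
  rewrite setIUr imsetU f1_P; apply: leq_ltn_trans (leq_card_setU _ _) _; lia.
exists f2; last by move=> x xP; rewrite f2f1 ?f1f // inE xP.
by rewrite setUCA setD1K in f2P.
Qed.

Lemma glue_colourings (W : {set V}) phi psi :
  proper_colouring e (~: W) phi -> proper_colouring e W psi ->
  (forall w y, w \in W -> y \notin W -> e w y -> psi w != phi y) ->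
  proper_colouring e setT (fun x => if x \in W then psi x else phi x).
Proof.
move=> phiP psiP cross x y _ _ xy.
case: (boolP (x \in W)) => xW; case: (boolP (y \in W)) => yW.
- exact: psiP.
- exact: cross.
- by rewrite eq_sym cross // e_sym.
- by apply: phiP; rewrite ?inE.
Qed.

Lemma cubic_nbhdI_le2 (W : {set V}) w y : e w y -> y \notin W -> #|nbhd e w :&: W| <= 2.
Proof.
move=> wy yW; have := cardsID W (nbhd e w); rewrite e_cubic.
have : 0 < #|nbhd e w :\: W| by apply/card_gt0P; exists y; rewrite !inE wy yW.
lia.
Qed.

Lemma cubic_nbhdI_le1 (W : {set V}) w y1 y2 :
  y1 != y2 -> e w y1 -> y1 \notin W -> e w y2 -> y2 \notin W -> #|nbhd e w :&: W| <= 1.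
Proof.
move=> y12 wy1 y1W wy2 y2W; have := cardsID W (nbhd e w); rewrite e_cubic.
have : 2 <= #|nbhd e w :\: W|.
  have <- : #|[set y1; y2]| = 2 by rewrite cards2 y12.
  apply/subset_leq_card/subsetP => z.
  by rewrite !inE => /orP [] /eqP ->; rewrite ?wy1 ?y1W ?wy2 ?y2W.
lia.
Qed.

Lemma cubic_nonadjacent_nbrs v : connected_graph e -> 6 <= #|V| ->
  exists a b, [/\ e v a, e v b, a != b & ~~ e a b].
Proof.
move=> conn V6.
case: (boolP [exists a, exists b, [&& e v a, e v b, a != b & ~~ e a b]]).
  by case/existsP => a /existsP [b /and4P [*]]; exists a, b.
move/existsPn => nonad_nbrs; suff : #|V| <= 4 by lia.
have clique a b : e v a -> e v b -> a != b -> e a b.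
  by move=> va vb ab; have /existsPn/(_ b) := nonad_nbrs a; rewrite va vb ab negbK.
have nbhd_s s : e v s -> nbhd e s = v |: (nbhd e v :\ s).
  move=> vs; apply/esym/eqP; rewrite eqEcard; apply/andP; split.
    apply/subsetP => z; rewrite !inE => /orP [/eqP ->|/andP [zs vz]]; first by rewrite e_sym.
    by apply: clique; rewrite // eq_sym.
  have := cardsD1 s (nbhd e v); have := e_cubic s.
  by rewrite cardsU1 !inE e_irr andbF vs !e_cubic /=; lia.
have closed : v |: nbhd e v = setT.
  apply: (connected_closed_setT conn (setU11 _ _)) => s y; rewrite !inE.
  case/orP => [/eqP -> ->|vs sy]; first by rewrite orbT.
  have : y \in nbhd e s by rewrite inE.
  by rewrite nbhd_s // !inE => /orP [->|/andP [_ ->]]; rewrite ?orbT.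
by rewrite -cardsT -closed cardsU1 e_cubic; case: (_ \notin _).
Qed.

Section ProperSubsetsColourable.

Hypothesis colour_proper :
  forall S : {set V}, #|S| < #|V| -> exists f, proper_colouring e S f.

Lemma colour_cut_adjacent (W : {set V}) x y z w :
  x \notin W -> y \notin W -> e x y -> separates e [set x; y] W ->
  z \notin x |: (y |: W) -> w \in W -> exists f, proper_colouring e setT f.
Proof.
move=> xW yW xy sepW zN wW; set X := x |: (y |: W).
have [phi phiP] : exists phi, proper_colouring e (~: W) phi.
  by apply/colour_proper/(notin_card_lt (x := w)); rewrite inE negbK.
have [psi psiP] := colour_proper (notin_card_lt zN).
have Xx : x \in X by rewrite !inE eqxx.
have Xy : y \in X by rewrite !inE eqxx orbT.
(* psi also colours the adjacent pair x, y, so permuting its colours makes it agree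
   with phi there. *)
have [p [px py]] : exists p : {perm 'I_3}, p (psi x) = phi x /\ p (psi y) = phi y.
  by apply: perm_map2; [apply: psiP | apply: phiP; rewrite ?inE].
have WX u : u \in W -> u \in X by rewrite !inE => ->; rewrite !orbT.
exists (fun u => if u \in W then p (psi u) else phi u); apply: glue_colourings => //.
  by move=> u u' uW u'W uu'; rewrite (inj_eq perm_inj); apply: psiP => //; apply: WX.
move=> u t uW tW ut; have /set2P [|] := sepW u t uW tW ut => tE; subst t.
  by rewrite -px (inj_eq perm_inj); apply: psiP => //; apply: WX.
by rewrite -py (inj_eq perm_inj); apply: psiP => //; apply: WX.
Qed.

Lemma colour_cut_light (W : {set V}) a b w :
  a \notin W -> b \notin W -> separates e [set a; b] W ->
  #|nbhd e a :&: W| <= 1 -> #|nbhd e b :&: W| <= 1 -> w \in W ->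
  exists f, proper_colouring e setT f.
Proof.
move=> aW bW sepW a1 b1 wW.
have [phi phiP] : exists phi, proper_colouring e (~: W) phi.
  by apply/colour_proper/(notin_card_lt (x := w)); rewrite inE negbK.
have [psi psiP] := colour_proper (notin_card_lt aW).
have seen c : #|nbhd e c :&: W| <= 1 ->
    exists xc, forall u, u \in W -> e u c -> psi u = xc.
  move=> /card_le1_eqP c1; have [N0|[u0 u0N]] := set_0Vmem (nbhd e c :&: W).
    by exists ord0 => u uW uc; move/setP/(_ u): N0; rewrite !inE e_sym uc uW.
  by exists (psi u0) => u uW uc; rewrite (c1 u u0) // !inE e_sym uc.
have [[xa seen_a] [xb seen_b]] := (seen a a1, seen b b1).
(* Each of a, b sees a single colour of psi in W; permute it away from phi. *)
have [p [pa pb]] := perm_avoid2 xa xb (phi a) (phi b).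
exists (fun u => if u \in W then p (psi u) else phi u); apply: glue_colourings => //.
  by move=> u u' uW u'W uu'; rewrite (inj_eq perm_inj); apply: psiP.
move=> u t uW tW ut; have /set2P [|] := sepW u t uW tW ut => tE; subst t.
  by rewrite seen_a.
by rewrite seen_b.
Qed.

Lemma colour_cut_absorb (W : {set V}) v a b :
  e v a -> e v b -> a != b -> a \notin W -> b \notin W -> v \notin W ->
  separates e [set a; b] W -> 2 <= #|nbhd e a :&: W| ->
  exists f, proper_colouring e setT f.
Proof.
move=> va vb ab aW bW vW sepW a2.
have [z vz zab] : exists2 z, e v z & z \notin [set a; b].
  have /subsetPn [z] : ~~ (nbhd e v \subset [set a; b]).
    by apply/negP => /subset_leq_card; rewrite e_cubic cards2; case: (a != b).
  by rewrite inE; exists z.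
have vab : v \notin [set a; b].
  by rewrite !inE; apply/norP; split; apply: contraTneq isT => vE; rewrite -vE e_irr in va vb.
have zW : z \notin W by apply: contra vab => zW; apply: (sepW z v zW vW); rewrite e_sym.
have zv : z != v by apply: contraTneq vz => ->; rewrite e_irr.
(* a has at most one neighbour outside W, namely v, so {v, b} separates a |: W. *)
apply: (colour_cut_adjacent (W := a |: W) (x := v) (y := b) (z := z) (w := a) _ _ vb).
- by rewrite !inE negb_or vW andbT; apply: contraTneq va => ->; rewrite e_irr.
- by rewrite !inE negb_or bW andbT eq_sym.
- move=> u t; rewrite !inE => /orP [/eqP ->|uW] /norP [ta tW] ut; apply/orP.
    left; apply: contraTT a2 => tv; rewrite -ltnNge ltnS.
    by apply: (cubic_nbhdI_le1 tv) => //; rewrite e_sym.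
  by right; have /set2P [tE|->] := sepW u t uW tW ut; rewrite ?tE ?eqxx in ta.
- by move: zab; rewrite !inE !negb_or zv zW => /andP [-> ->].
- by rewrite !inE eqxx.
Qed.

Lemma colour_two_cut (W : {set V}) v a b w :
  e v a -> e v b -> a != b -> a \notin W -> b \notin W -> v \notin W ->
  separates e [set a; b] W -> w \in W -> exists f, proper_colouring e setT f.
Proof.
move=> va vb ab aW bW vW sepW wW.
have [a2|a1] := leqP 2 #|nbhd e a :&: W|; first exact: (colour_cut_absorb va vb ab aW bW vW sepW a2).
have [b2|b1] := leqP 2 #|nbhd e b :&: W|.
  apply: (colour_cut_absorb vb va _ bW aW vW _ b2); first by rewrite eq_sym.
  by move=> u t uW tW /(sepW u t uW tW); rewrite !inE orbC.
exact: (colour_cut_light aW bW sepW a1 b1 wW).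
Qed.

Lemma colour_saturated_set (W : {set V}) v a b :
  e v a -> e v b -> a != b -> a \notin W -> b \notin W -> W != set0 ->
  (forall w, w \in W -> 2 < #|nbhd e w :&: W| + (e w a || e w b)) ->
  exists f, proper_colouring e setT f.
Proof.
move=> va vb ab aW bW W0 saturated.
have sepW : separates e [set a; b] W.
  move=> w y wW yW wy; apply: contraT; rewrite !inE negb_or => /andP [ya yb].
  have : #|nbhd e w :&: W| + (e w a || e w b) <= 2.
    case: (boolP (e w a)) => [wa|_] /=.
      by rewrite addn1 ltnS (cubic_nbhdI_le1 ya wy yW wa aW).
    case: (boolP (e w b)) => [wb|_] /=.
      by rewrite addn1 ltnS (cubic_nbhdI_le1 yb wy yW wb bW).
    by rewrite addn0 (cubic_nbhdI_le2 wy yW).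
  by rewrite leqNgt saturated.
have vW : v \notin W.
  apply/negP => /saturated; rewrite va /= addn1 ltnS leqNgt ltnS.
  by rewrite (cubic_nbhdI_le1 ab va aW vb bW).
have /set0Pn [w wW] := W0.
exact: (colour_two_cut va vb ab aW bW vW sepW wW).
Qed.

(* Colour the non-adjacent neighbours a, b of v alike and extend greedily; a set
   on which the greedy extension gets stuck is separated from the rest by {a, b}. *)
Lemma colour_setT : connected_graph e -> 6 <= #|V| -> exists f, proper_colouring e setT f.
Proof.
move=> conn V6; have /card_gt0P [v _] : 0 < #|V| by lia.
have [a [b [va vb ab nab]]] := cubic_nonadjacent_nbrs v conn V6.
pose f0 (_ : V) : 'I_3 := ord0.
have f0P : proper_colouring e [set a; b] f0.
  by move=> x y /set2P [] -> /set2P [] ->; rewrite ?e_irr ?(negbTE nab) // e_sym (negbTE nab).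
have f0_seen w : #|f0 @: (nbhd e w :&: [set a; b])| <= (e w a || e w b).
  case: (boolP (e w a || e w b)) => [_|/norP [wa wb]].
    have img0 : f0 @: (nbhd e w :&: [set a; b]) \subset [set ord0].
      by apply/subsetP => _ /imsetP [? _ ->]; rewrite inE.
    by rewrite (leq_trans (subset_leq_card img0)) ?cards1.
  rewrite leqn0 cards_eq0 imset_eq0; apply/eqP/setP => u; rewrite !inE.
  by apply/negbTE/andP => -[wu /orP [] /eqP uE]; rewrite -uE wu in wa wb.
case: (boolP [forall W : {set V}, (W \subset ~: [set a; b]) && (W != set0) ==>
    [exists w in W, #|nbhd e w :&: W| + #|f0 @: (nbhd e w :&: [set a; b])| <= 2]]).
  move/forallP => degenerate.
  have [f fP _] : exists2 f, proper_colouring e ([set a; b] :|: ~: [set a; b]) f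
                           & {in [set a; b], f =1 f0}.
    apply: (colour_greedy f0P); first by rewrite -subsets_disjoint.
    move=> W WU W0; have /implyP/(_ (introT andP (conj WU W0))) := degenerate W.
    by case/existsP => w /andP [wW w2]; exists w.
  by exists f; rewrite setUCr in fP.
rewrite negb_forall => /existsP [W]; rewrite negb_imply => /andP [/andP [WU W0]].
rewrite negb_exists => /forallP stuck.
apply: (colour_saturated_set va vb ab (W := W)) => //.
- by apply/negP => /(subsetP WU); rewrite !inE eqxx.
- by apply/negP => /(subsetP WU); rewrite !inE eqxx orbT.
- move=> w wW; have := stuck w; rewrite wW /= -ltnNge => /leq_trans; apply.
  by rewrite leq_add2l f0_seen.
Qed.

End ProperSubsetsColourable.

Lemma cubic_colourable (S : {set V}) :
  connected_graph e -> 6 <= #|V| -> exists f, proper_colouring e S f.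
Proof.
move=> conn V6; have [n] := ubnP #|S|; elim: n S => // n IH S /ltnSE leSn.
case: (boolP [exists s in S, #|nbhd e s :&: S| <= 2]).
  case/existsP => s /andP [sS s2].
  have [f fP] : exists f, proper_colouring e (S :\ s) f.
    by apply: IH; move: leSn; rewrite (cardsD1 s S) sS.
  have [f' f'P _] : exists2 f', proper_colouring e (s |: (S :\ s)) f' & {in S :\ s, f' =1 f}.
    apply: colour_extend1 fP _ _ => //; first by rewrite !inE eqxx.
    rewrite ltnS; apply: leq_trans (leq_imset_card _ _) (leq_trans _ s2).
    exact/subset_leq_card/setIS/subsetDl.
  by exists f'; rewrite setD1K in f'P.
move/existsPn => heavy; have [->|[x xS]] := set_0Vmem S.
  by exists (fun _ => ord0) => ? ?; rewrite inE.
have ST : S = setT.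
  apply: (connected_closed_setT conn xS) => s y sS sy; apply: contraT => yS.
  by have := heavy s; rewrite sS (cubic_nbhdI_le2 sy yS).
rewrite ST; apply: colour_setT => // T ltT; apply: IH.
by rewrite (leq_trans ltT) // -cardsT -ST.
Qed.

End Colouring.

Section Counting.

Variables (V : finType) (e : rel V).
Hypotheses (e_sym : symmetric e) (e_irr : irreflexive e) (e_cubic : cubic e).

Lemma card_le_3alpha f : proper_colouring e setT f -> #|V| <= 3 * alpha e.
Proof.
move=> fP; have indep j : independent e [set x | f x == j].
  apply/forall_inP => x; rewrite inE => /eqP fx; apply/forall_inP => y; rewrite inE => /eqP fy.
  by apply/negP => xy; have := fP x y (in_setT x) (in_setT y) xy; rewrite fx fy eqxx.
have -> : #|V| = \sum_(j < 3) #|[set x | f x == j]|.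
  rewrite -sum1_card (partition_big f xpredT) //=.
  by apply: eq_bigr => j _; rewrite sum_nat_cond_const muln1.
apply: (@leq_trans (\sum_(j < 3) alpha e)); last by rewrite sum_nat_const card_ord.
by apply: leq_sum => j _; apply: leq_card_alpha.
Qed.

Lemma sum_nbhdI_swap (A B : {set V}) :
  \sum_(x in A) #|nbhd e x :&: B| = \sum_(y in B) #|nbhd e y :&: A|.
Proof.
under eq_bigr do rewrite card_nbhdI; under [RHS]eq_bigr do rewrite card_nbhdI.
by rewrite exchange_big; apply: eq_bigr => y _; apply: eq_bigr => x _; rewrite e_sym.
Qed.

Lemma degree_sum_even : 2 %| \sum_x #|nbhd e x|.
Proof.
pose below x y := e x y && (enum_rank x < enum_rank y).
have split_edge x y : (e x y : nat) = below x y + below y x.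
  rewrite /below (e_sym y x); case: (boolP (e x y)) => //= xy.
  case: ltngtP => // /val_inj/enum_rank_inj xE.
  by rewrite xE e_irr in xy.
have halves : \sum_x \sum_y (below x y : nat) = \sum_x \sum_y (below y x : nat).
  by rewrite exchange_big.
have card_nbhd x : #|nbhd e x| = \sum_y e x y.
  by rewrite -[nbhd e x]setIT card_nbhdI; apply: eq_bigl => y; rewrite inE.
under eq_bigr do rewrite card_nbhd.
under eq_bigr do under eq_bigr do rewrite split_edge.
under eq_bigr do rewrite big_split.
by rewrite big_split /= -halves addnn -mul2n dvdn_mulr.
Qed.

Lemma dissociation_half_independent (X : {set V}) : dissociation e X ->
  exists2 T : {set V}, T \subset X & independent e T /\ #|X| <= 2 * #|T|.
Proof.
move=> /forall_inP X1.
have partner x y z : x \in X -> e x y -> y \in X -> e x z -> z \in X -> y = z.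
  by move=> /X1 /card_le1_eqP x1 xy yX xz zX; apply: x1; rewrite !inE ?xy ?xz.
pose mate x := odflt x [pick y in X | e x y].
have mateE x y : x \in X -> e x y -> y \in X -> mate x = y.
  move=> xX xy yX; rewrite /mate; case: pickP => [z /andP [zX xz]|/(_ y)].
    exact: partner xX xz zX xy yX.
  by rewrite yX xy.
(* T is the set of vertices of X whose neighbour in X, if any, has larger rank;
   the other vertices of X inject into T through [mate]. *)
set T := [set x in X | [forall y in X, e x y ==> (enum_rank x < enum_rank y)]].
have TX : T \subset X by apply/subsetP => x; rewrite inE => /andP [].
exists T => //; split.
  apply/forall_inP => x; rewrite inE => /andP [xX /forall_inP xT].
  apply/forall_inP => y; rewrite inE => /andP [yX /forall_inP yT].
  apply/negP => xy; have := ltn_trans (implyP (xT y yX) xy) (implyP (yT x xX) _).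
  by rewrite ltnn e_sym => /(_ xy).
have mateT x : x \in X :\: T -> mate x \in T /\ e x (mate x).
  rewrite !inE => /andP [xNT xX]; move: xNT; rewrite xX => /forall_inPn [y yX].
  rewrite negb_imply -leqNgt => /andP [xy le_yx]; rewrite (mateE x y) //.
  split => //; rewrite yX; apply/forall_inP => z zX; apply/implyP => yz.
  have -> : z = x by apply: (partner y); rewrite // e_sym.
  rewrite ltn_neqAle le_yx andbT; apply: contraTneq xy => /val_inj/enum_rank_inj ->.
  by rewrite e_irr.
have mate_inj : {in X :\: T &, injective mate}.
  move=> x1 x2 x1XT x2XT m12; have [t1 e1] := mateT x1 x1XT; have [_ e2] := mateT x2 x2XT.
  move: x1XT x2XT; rewrite !inE => /andP [_ x1X] /andP [_ x2X].
  by apply: (partner (mate x1)) => //; [exact: (subsetP TX) | rewrite e_sym | rewrite m12 e_sym].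
have : #|X :\: T| <= #|T|.
  rewrite -(card_in_imset mate_inj); apply/subset_leq_card/subsetP => _ /imsetP [x xXT ->].
  by case: (mateT x xXT).
by have := cardsID T X; rewrite (setIidPr TX); lia.
Qed.

Lemma card_nbhdI_compl (D : {set V}) x : #|nbhd e x :&: ~: D| = 3 - #|nbhd e x :&: D|.
Proof. by rewrite -(e_cubic x) -(cardsID D (nbhd e x)) setDE addKn. Qed.

Lemma sum_nbhd_out_dissociation (D : {set V}) : dissociation e D ->
  2 * #|D| + #|isolated e D| <= \sum_(x in D) #|nbhd e x :&: ~: D|.
Proof.
move=> /forall_inP D1.
have -> : 2 * #|D| + #|isolated e D| = \sum_(x in D) (2 + (x \in isolated e D)).
  have isoD : isolated e D \subset D by apply/subsetP => x; rewrite inE => /andP [].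
  by rewrite big_split sum_nat_const sum_mem_card (setIidPr isoD) mulnC.
apply: leq_sum => x xD; rewrite card_nbhdI_compl inE xD /=.
by have := D1 x xD; case: #|_| => [|[|]].
Qed.

Lemma sum_nbhd_in_compl (D : {set V}) :
  \sum_(r in ~: D) #|nbhd e r :&: D| <= #|~: D| + 2 * alpha e.
Proof.
set R := ~: D; set R2 := [set r in R | #|nbhd e r :&: D| == 2].
set R3 := [set r in R | #|nbhd e r :&: D| == 3].
have [R2R R3R] : R2 \subset R /\ R3 \subset R by split; apply/subsetP => r; rewrite inE => /andP [].
have R3_nbhd r y : r \in R3 -> e r y -> y \in D.
  rewrite inE => /andP [_ /eqP r3] ry.
  have full : nbhd e r :&: D = nbhd e r by apply/eqP; rewrite eqEcard subsetIl r3 e_cubic.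
  have : y \in nbhd e r :&: D by rewrite full inE.
  by rewrite inE => /andP [].
have R2_diss : dissociation e R2.
  apply/forall_inP => r; rewrite inE => /andP [rR /eqP r2].
  apply: leq_trans (subset_leq_card (setIS _ R2R)) _.
  by rewrite card_nbhdI_compl r2.
have [T TR2 [T_indep R2T]] := dissociation_half_independent R2_diss.
have R3T : [disjoint R3 & T].
  apply/pred0P => r /=; apply/negP => /andP [r3 /(subsetP TR2)].
  by rewrite !inE in r3 *; case/andP: r3 => _ /eqP ->; rewrite andbF.
have indep : independent e (R3 :|: T).
  apply/forall_inP => x xS; apply/forall_inP => y yS; apply/negP => xy.
  have [xR yR] : x \in R /\ y \in R.
    by split; [move: xS | move: yS]; case/setUP => [/(subsetP R3R)|/(subsetP TR2)/(subsetP R2R)].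
  case/setUP: xS => [x3|xT]; first by move: yR; rewrite inE (R3_nbhd x y).
  case/setUP: yS => [y3|yT]; first by move: xR; rewrite inE (R3_nbhd y x) // e_sym.
  by move/forall_inP: T_indep => /(_ x xT)/forall_inP/(_ y yT); rewrite xy.
have := leq_card_alpha indep; rewrite cardsU (disjoint_setI0 R3T) cards0 subn0 => le_alpha.
apply: (@leq_trans (#|R| + #|R2| + 2 * #|R3|)); last by lia.
have -> : #|R| + #|R2| + 2 * #|R3| = \sum_(r in R) (1 + (r \in R2) + (r \in R3) + (r \in R3)).
  rewrite !big_split /= sum1_card !sum_mem_card (setIidPr R2R) (setIidPr R3R); lia.
apply: leq_sum => r; rewrite !inE => -> /=.
have : #|nbhd e r :&: D| <= 3 by rewrite -(e_cubic r) subset_leq_card ?subsetIl.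
by case: #|_| => [|[|[|[|]]]].
Qed.

Lemma dissociation_bound (D : {set V}) : dissociation e D ->
  3 * #|D| + #|isolated e D| <= #|V| + 2 * alpha e.
Proof.
move=> dissD; have := sum_nbhd_out_dissociation dissD.
rewrite sum_nbhdI_swap // => /leq_trans/(_ (sum_nbhd_in_compl D)).
by have := cardsC D; lia.
Qed.

End Counting.

Theorem mainTheorem2 (V : finType) (e : rel V) :
  simple_graph e -> connected_graph e -> cubic e -> 6 <= #|V| ->
  5 * alpha e = 3 * diss e ->
  [/\ 18 %| #|V|, 3 * alpha e = #|V|, 9 * diss e = 5 * #|V| &
      forall D : {set V}, max_dissociation e D ->
        forall v, v \in D -> #|nbhd e v :&: D| = 1].
Proof.
move=> [e_sym e_irr] conn e_cubic V6 alpha_diss.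
have [f fP] := cubic_colourable e_sym e_irr e_cubic setT conn V6.
have V_alpha := card_le_3alpha fP.
have [D0 [dissD0 cardD0]] := exists_max_dissociation e.
have := dissociation_bound e_sym e_irr e_cubic dissD0; rewrite cardD0 => D0_bound.
have alphaE : 3 * alpha e = #|V| by lia.
have dissE : 9 * diss e = 5 * #|V| by lia.
have V_even : 2 %| #|V| * 3.
  by have := degree_sum_even e_sym e_irr; under eq_bigr do rewrite e_cubic; rewrite sum_nat_const.
split => // [|D [dissD cardD] v vD]; first by lia.
have := dissociation_bound e_sym e_irr e_cubic dissD; rewrite cardD => D_bound.
have /eqP : #|isolated e D| = 0 by lia.
rewrite cards_eq0 => /eqP /setP /(_ v); rewrite !inE vD /=.
by move/forall_inP: dissD => /(_ v vD); case: #|_| => [|[|]].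
Qed.
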